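(* In dimension $3$, every possible Riemann curvature tensor occurs as the curvature tensor of a Hessian metric: for every algebraic curvature tensor $R$ on $\mathbb{R}^3$ with its standard inner product, there exist a Hessian metric $g$ on an open set $U\subset\mathbb{R}^3$, a point $p\in U$, and a linear isometry $(T_pU, g_p)\to\mathbb{R}^3$ carrying the Riemann curvature tensor of $g$ at $p$ to $R$.
   Context: A Riemannian metric $g$ is Hessian if around each point there are local coordinates $x$ and a function $\phi$ with $g_{ij} = \partial^2\phi/\partial x_i\partial x_j$. An algebraic curvature tensor on an inner product space $T$ is an element of $\Lambda^2T^*\otimes\Lambda^2T^*$ symmetric under exchanging the two pairs and satisfying the first Bianchi identity. *)

From HB Require Import structures.
From mathcomp Require Import all_boot all_order all_algebra.
From mathcomp Require Import all_classical all_reals all_analysis.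
Set Implicit Arguments. Unset Strict Implicit. Unset Printing Implicit Defensive.
Import Order.TTheory GRing.Theory Num.Theory.
Import numFieldNormedType.Exports.
Local Open Scope classical_set_scope.
Local Open Scope ring_scope.

Section Defs.
Variable R : realType.
Local Notation V := 'rV[R]_3.

Definition ev (i : 'I_3) : V := delta_mx 0 i.

Definition pd (i : 'I_3) (f : V -> R) : V -> R := fun x => 'D_(ev i) f x.

Definition iter_pd (l : seq 'I_3) (f : V -> R) : V -> R := foldr pd f l.

Definition smooth_on (U : set V) (f : V -> R) : Prop :=
  forall (l : seq 'I_3) (x : V), U x ->
    {for x, continuous (iter_pd l f)} /\ (forall i, derivable (iter_pd l f) x (ev i)).

Definition smooth_map_on (U : set V) (F : V -> V) : Prop :=
  forall i : 'I_3, smooth_on U (fun y => F y 0 i).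

(* Riemannian metric on the open set U, given by its matrix in standard coordinates *)
Definition riem_metric (U : set V) (g : V -> 'M[R]_3) : Prop :=
  open U /\ (forall i j, smooth_on U (fun y => g y i j)) /\
  (forall y, U y -> (g y)^T = g y /\
     forall v : V, v != 0 -> 0 < (v *m g y *m v^T) 0 0).

Definition jac (F : V -> V) (z : V) : 'M[R]_3 :=
  \matrix_(i, a) pd a (fun w => F w 0 i) z.

Definition hess (phi : V -> R) (z : V) : 'M[R]_3 :=
  \matrix_(a, b) pd a (pd b phi) z.

(* Hessian metric: around each point there are local coordinates psi (with smooth
   inverse chi) and a function phi such that the metric in these coordinates,
   (jac chi)^T g (jac chi), is the Hessian of phi. *)
Definition hessian_metric (U : set V) (g : V -> 'M[R]_3) : Prop :=
  riem_metric U g /\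
  forall q, U q -> exists (W : set V) (psi chi : V -> V) (phi : V -> R),
    open W /\ W q /\ W `<=` U /\ open (psi @` W) /\
    smooth_map_on W psi /\ smooth_map_on (psi @` W) chi /\
    (forall y, W y -> chi (psi y) = y) /\
    (forall z, (psi @` W) z -> psi (chi z) = z) /\
    smooth_on (psi @` W) phi /\
    (forall z, (psi @` W) z ->
       (jac chi z)^T *m g (chi z) *m jac chi z = hess phi z).

Definition christoffel (g : V -> 'M[R]_3) (k i j : 'I_3) (x : V) : R :=
  2^-1 * \sum_(l < 3) (invmx (g x)) k l *
    (pd i (fun y => g y j l) x + pd j (fun y => g y i l) x
       - pd l (fun y => g y i j) x).

(* R^l_{ijk}, with R(d_i, d_j) d_k = sum_l R^l_{ijk} d_l,
   R(X,Y) = nabla_X nabla_Y - nabla_Y nabla_X - nabla_[X,Y] *)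
Definition riem_up (g : V -> 'M[R]_3) (l i j k : 'I_3) (x : V) : R :=
  pd i (christoffel g l j k) x - pd j (christoffel g l i k) x
  + \sum_(m < 3) (christoffel g l i m x * christoffel g m j k x
                  - christoffel g l j m x * christoffel g m i k x).

(* Riemann curvature tensor Rm(d_i,d_j,d_k,d_l) = g(R(d_i,d_j)d_k, d_l) *)
Definition riem (g : V -> 'M[R]_3) (i j k l : 'I_3) (x : V) : R :=
  \sum_(m < 3) riem_up g m i j k x * g x m l.

(* 4-tensors on R^3 given by components in the standard (orthonormal) basis *)
Definition tensor4 := 'I_3 -> 'I_3 -> 'I_3 -> 'I_3 -> R.

Definition alg_curv (A : tensor4) : Prop :=
  forall i j k l,
    A i j k l = - A j i k l /\ A i j k l = - A i j l k /\
    A i j k l = A k l i j /\ A i j k l + A j k i l + A k i j l = 0.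

Definition ev4 (A : tensor4) (u1 u2 u3 u4 : V) : R :=
  \sum_(i < 3) \sum_(j < 3) \sum_(k < 3) \sum_(l < 3)
     A i j k l * u1 0 i * u2 0 j * u3 0 k * u4 0 l.

End Defs.

From HB Require Import structures.
From mathcomp Require Import all_boot all_order all_algebra.
From mathcomp Require Import all_classical all_reals all_analysis.
From mathcomp Require Import ring lra.
Set Implicit Arguments. Unset Strict Implicit. Unset Printing Implicit Defensive.
Import Order.TTheory GRing.Theory Num.Theory.
Import numFieldNormedType.Exports.
Local Open Scope classical_set_scope.
Local Open Scope ring_scope.

(* For a cubic form C symmetric in its three indices, the potential
   phi(x) = |x|^2/2 + (1/6) sum C_ijk x_i x_j x_k has Hessian g = I + sum_k C_ijk x_k,
   a Hessian metric near 0 with g(0) = I.  Since dg = C and d(g^-1)(0) = -C, the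
   Christoffel symbols at 0 are C_ijk/2 with derivatives -(1/2) sum_l C_ijl C_klm,
   and the curvature at 0 is R_ijkl = (1/4) sum_q (C_ikq C_jlq - C_ilq C_jkq).  An
   algebraic curvature tensor on R^3 is determined by its six components R_1212,
   R_1313, R_2323, R_1213, R_1223, R_1323, and the resulting six quadratic equations
   in the ten coefficients of C have a solution for every right-hand side, given by
   explicit families. *)

Section PolynomialFunctions.
Variables (R : realType) (m : nat).
Local Notation V := 'rV[R]_m.
Implicit Types (f g : V -> R) (x v : V).

Inductive polyfun : (V -> R) -> Prop :=
| polyfun_cst (c : R) : polyfun (fun=> c)
| polyfun_coord (j : 'I_m) : polyfun (fun x => x 0 j)
| polyfunD f g : polyfun f -> polyfun g -> polyfun (fun x => f x + g x)
| polyfunM f g : polyfun f -> polyfun g -> polyfun (fun x => f x * g x).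

Lemma polyfun_sum (I : Type) (r : seq I) (P : pred I) (F : I -> V -> R) :
  (forall i, polyfun (F i)) -> polyfun (fun x => \sum_(i <- r | P i) F i x).
Proof.
move=> PF; rewrite -fct_sumE.
by elim/big_ind: _ => //; [exact: polyfun_cst | exact: polyfunD].
Qed.

Lemma polyfun_prod (I : Type) (r : seq I) (P : pred I) (F : I -> V -> R) :
  (forall i, polyfun (F i)) -> polyfun (fun x => \prod_(i <- r | P i) F i x).
Proof.
move=> PF; rewrite -fct_prodE.
by elim/big_ind: _ => //; [exact: polyfun_cst | exact: polyfunM].
Qed.

Lemma polyfun_det n (M : V -> 'M[R]_n) :
  (forall i j, polyfun (fun x => M x i j)) -> polyfun (fun x => \det (M x)).
Proof.
move=> PM; apply: polyfun_sum => s; apply: (polyfunM (polyfun_cst _)).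
exact: polyfun_prod.
Qed.

Lemma polyfun_adj n (M : V -> 'M[R]_n) i j :
  (forall i j, polyfun (fun x => M x i j)) -> polyfun (fun x => \adj (M x) i j).
Proof.
move=> PM; under eq_fun => x do rewrite mxE.
apply: (polyfunM (polyfun_cst _)); apply: polyfun_det => k l.
by under eq_fun => x do rewrite !mxE.
Qed.

Lemma continuous_polyfun f : polyfun f -> continuous f.
Proof.
elim=> {f} [c|j|f g _ cf _ cg|f g _ cf _ cg] x.
- exact: cst_continuous.
- exact: (@coord_continuous R 1 m 0 j).
- exact: (@cvgD _ _ _ _ (@mx_nbhs_filter _ _ _ x) _ _ _ _ (cf x) (cg x)).
- exact: (@cvgM _ _ _ (@mx_nbhs_filter _ _ _ x) _ _ _ _ (cf x) (cg x)).
Qed.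

Lemma derive_coord j x v :
  derivable (fun y : V => y 0 j) x v /\ 'D_v (fun y : V => y 0 j) x = v 0 j.
Proof.
have did : derivable (id : V -> V) x v by exact: derivable_id.
split; first exact: (derivable_mxP _ _ _).1 did 0 j.
by have /matrixP/(_ 0 j) := derive_mx did; rewrite derive_id mxE.
Qed.

Lemma derivable_polyfun f x v : polyfun f -> derivable f x v.
Proof.
elim=> {f} [c|j|f g _ df _ dg|f g _ df _ dg].
- exact: derivable_cst.
- exact: (derive_coord j x v).1.
- exact: derivableD.
- exact: derivableM.
Qed.

(* Pointwise forms of the library's differentiation rules, which match functions
   written as [fun y => ...]. *)
Lemma deriveDf f g x v : derivable f x v -> derivable g x v ->
  'D_v (fun y => f y + g y) x = 'D_v f x + 'D_v g x.
Proof. exact: deriveD. Qed.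

Lemma deriveMf f g x v : derivable f x v -> derivable g x v ->
  'D_v (fun y => f y * g y) x = f x * 'D_v g x + g x * 'D_v f x.
Proof. exact: deriveM. Qed.

Lemma derive_scalef (c : R) f x v : derivable f x v ->
  'D_v (fun y => c * f y) x = c * 'D_v f x.
Proof.
by move=> df; rewrite deriveMf ?derive_cst ?mulr0 ?addr0 //; exact: derivable_cst.
Qed.

Lemma derivable_scalef (c : R) f x v : derivable f x v ->
  derivable (fun y => c * f y) x v.
Proof. by move=> df; apply: derivableM => //; exact: derivable_cst. Qed.

Lemma derivable_sumf n (F : 'I_n -> V -> R) x v : (forall i, derivable (F i) x v) ->
  derivable (fun y => \sum_(i < n) F i y) x v.
Proof. by move=> dF; rewrite -fct_sumE; exact: derivable_sum. Qed.

Lemma derive_sumf n (F : 'I_n -> V -> R) x v : (forall i, derivable (F i) x v) ->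
  'D_v (fun y => \sum_(i < n) F i y) x = \sum_(i < n) 'D_v (F i) x.
Proof. by move=> dF; rewrite -fct_sumE derive_sum. Qed.

Lemma polyfun_derive f v : polyfun f -> polyfun (fun x => 'D_v f x).
Proof.
elim=> {f} [c|j|f g pf Pf pg Pg|f g pf Pf pg Pg].
- by under eq_fun => x do rewrite derive_cst; exact: polyfun_cst.
- by under eq_fun => x do rewrite (derive_coord j x v).2; exact: polyfun_cst.
- under eq_fun => x do rewrite (deriveDf (derivable_polyfun pf) (derivable_polyfun pg)).
  exact: polyfunD.
- under eq_fun => x do rewrite (deriveMf (derivable_polyfun pf) (derivable_polyfun pg)).
  by apply: polyfunD; apply: polyfunM.
Qed.

End PolynomialFunctions.

Ltac polyfun_auto := repeat first
  [ apply: derivable_polyfun | exact: polyfun_cst | exact: polyfun_coord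
  | apply: polyfunD | apply: polyfunM | apply: polyfun_sum => ? ].

Lemma sum_delta (R : pzSemiRingType) n (i : 'I_n) (F : 'I_n -> R) :
  \sum_(j < n) (i == j)%:R * F j = F i.
Proof.
rewrite (bigD1 i) //= eqxx mul1r big1 ?addr0 // => j /negbTE.
by rewrite eq_sym => ->; rewrite mul0r.
Qed.

Section Forms.
Variables (R : realType) (m : nat).
Local Notation V := 'rV[R]_m.
Implicit Types (f : V -> R) (x v : V).

Lemma derive_coord_delta b j x :
  'D_(delta_mx 0 b) (fun y : V => y 0 j) x = (b == j)%:R.
Proof. by rewrite (derive_coord _ _ _).2 mxE eqxx eq_sym. Qed.

Lemma derive_linear_form (a : 'I_m -> R) b x :
  'D_(delta_mx 0 b) (fun y : V => \sum_i a i * y 0 i) x = a b.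
Proof.
rewrite derive_sumf => [|i]; last by polyfun_auto.
rewrite -(sum_delta b a); apply: eq_bigr => i _.
rewrite derive_scalef; last by polyfun_auto.
by rewrite derive_coord_delta mulrC.
Qed.

Lemma derive_quadratic_form (Q : 'I_m -> 'I_m -> R) b x :
  (forall i j, Q i j = Q j i) ->
  'D_(delta_mx 0 b) (fun y : V => \sum_i \sum_j Q i j * y 0 i * y 0 j) x =
  2 * \sum_j Q b j * x 0 j.
Proof.
move=> Q_sym; rewrite derive_sumf => [|i]; last by polyfun_auto.
pose T i j := (b == i)%:R * (Q i j * x 0 j).
transitivity (\sum_i \sum_j (T i j + T j i)).
  apply: eq_bigr => i _; rewrite derive_sumf => [|j]; last by polyfun_auto.
  apply: eq_bigr => j _; rewrite deriveMf; try by polyfun_auto.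
  rewrite derive_scalef; last by polyfun_auto.
  by rewrite !derive_coord_delta /T (Q_sym j i); ring.
under eq_bigr do rewrite big_split.
rewrite big_split /= [X in _ + X]exchange_big /= -mulr2n [RHS]mulr_natl.
by under eq_bigr do rewrite -mulr_sumr; rewrite sum_delta.
Qed.

Lemma derive_cubic_form (C : 'I_m -> 'I_m -> 'I_m -> R) b x :
  (forall i j k, C i j k = C j i k) -> (forall i j k, C i j k = C i k j) ->
  'D_(delta_mx 0 b) (fun y : V => \sum_i \sum_j \sum_k C i j k * y 0 i * y 0 j * y 0 k) x =
  3 * \sum_j \sum_k C b j k * x 0 j * x 0 k.
Proof.
move=> C12 C23; have C31 i j k : C k i j = C i j k by rewrite C12 C23.
rewrite derive_sumf => [|i]; last by polyfun_auto.
pose T i j k := (b == i)%:R * (C i j k * x 0 j * x 0 k).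
transitivity (\sum_i \sum_j \sum_k (T i j k + T j i k + T k i j)).
  apply: eq_bigr => i _; rewrite derive_sumf => [|j]; last by polyfun_auto.
  apply: eq_bigr => j _; rewrite derive_sumf => [|k]; last by polyfun_auto.
  apply: eq_bigr => k _; rewrite deriveMf; try by polyfun_auto.
  rewrite deriveMf; try by polyfun_auto.
  rewrite derive_scalef; last by polyfun_auto.
  by rewrite !derive_coord_delta /T (C12 j i k) (C31 i j k); ring.
under eq_bigr do under eq_bigr do rewrite !big_split.
under eq_bigr do rewrite !big_split.
rewrite !big_split /= [X in _ + X + _]exchange_big /=.
under [X in _ + X]eq_bigr do rewrite exchange_big.
rewrite [X in _ + X]exchange_big /=.
suff -> : \sum_i \sum_j \sum_k T i j k = \sum_j \sum_k C b j k * x 0 j * x 0 k.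
  by rewrite [RHS]mulr_natl !mulrSr mulr0n add0r.
rewrite -(sum_delta b (fun i => \sum_j \sum_k C i j k * x 0 j * x 0 k)).
by apply: eq_bigr => i _; rewrite mulr_sumr; apply: eq_bigr => j _; rewrite mulr_sumr.
Qed.

End Forms.

Section InverseMatrix.
Variables (R : realType) (m n : nat) (M : 'rV[R]_m -> 'M[R]_n).
Hypothesis polyfun_M : forall i j, polyfun (fun x => M x i j).

Lemma derivable_polyfun_mx x v : derivable M x v.
Proof. by apply/derivable_mxP => i j; exact: derivable_polyfun. Qed.

Lemma derive_invmx x v : M x \in unitmx ->
  derivable (fun y => invmx (M y)) x v /\
  'D_v (fun y => invmx (M y)) x = - (invmx (M x) *m 'D_v M x *m invmx (M x)).
Proof.
move=> Mx_unit; have FF := @mx_nbhs_filter 1 m R x.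
have near_unit : \forall y \near x, M y \in unitmx.
  have det_cvg : (fun y => \det (M y)) @ x --> \det (M x).
    exact: continuous_polyfun (polyfun_det polyfun_M) x.
  have := @cvgr_neq0 _ _ _ _ FF _ _ det_cvg; rewrite -unitfE -unitmxE.
  by move=> /(_ Mx_unit); apply: filterS => y; rewrite unitmxE unitfE.
have dN : derivable (fun y => invmx (M y)) x v.
  apply/derivable_mxP => k l.
  have near_adj : \forall y \near x,
      (\det (M y))^-1 * \adj (M y) k l = invmx (M y) k l.
    by move: near_unit; apply: filterS => y Uy; rewrite /invmx Uy !mxE.
  apply: near_eq_derivable near_adj _.
  apply: derivableM; last exact: derivable_polyfun (polyfun_adj _ _ polyfun_M).
  apply: derivableV; first by rewrite -unitfE.
  exact: derivable_polyfun (polyfun_det polyfun_M).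
split=> //; set DN := 'D_v _ x.
have product_rule : M x *m DN + 'D_v M x *m invmx (M x) = 0.
  apply/matrixP => k l; rewrite /DN (derive_mx dN) (derive_mx (@derivable_polyfun_mx x v)).
  rewrite !mxE.
  have near_one : \forall y \near x,
      \sum_(q < n) M y k q * invmx (M y) q l = (k == l)%:R.
    move: near_unit; apply: filterS => y Uy.
    by move/matrixP/(_ k l): (mulmxV Uy); rewrite !mxE.
  have D0 : 'D_v (fun y => \sum_(q < n) M y k q * invmx (M y) q l) x = 0.
    by rewrite (near_eq_derive _ near_one) derive_cst.
  rewrite -big_split /=; apply: etrans D0; symmetry.
  rewrite derive_sumf => [|q]; last first.
    apply: derivableM; first exact: derivable_polyfun.
    exact: (derivable_mxP _ _ _).1 dN q l.
  apply: eq_bigr => q _; rewrite deriveMf; last first.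
  - exact: (derivable_mxP _ _ _).1 dN q l.
  - exact: derivable_polyfun.
  by rewrite !mxE [in RHS]mulrC; congr (_ + _); rewrite mulrC.
rewrite -mulmxA -mulmxN -[LHS](mulKmx Mx_unit); congr (_ *m _).
by apply/eqP; rewrite -addr_eq0 product_rule.
Qed.

End InverseMatrix.

Lemma ler_mul_perturb (R : realFieldType) n (a b d e : R) : (0 < n)%N ->
  `|e - d| <= (2 * n%:R)^-1 -> a * b * d - (a ^+ 2 + b ^+ 2) / (4 * n%:R) <= a * b * e.
Proof.
move=> n_gt0 e_near.
have ab_le : `|a * b| <= (a ^+ 2 + b ^+ 2) / 2.
  rewrite normrM ler_pdivlMr // -[a ^+ 2]real_normK ?num_real //.
  rewrite -[b ^+ 2]real_normK ?num_real // -subr_ge0.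
  by rewrite (_ : _ - _ = (`|a| - `|b|) ^+ 2) ?sqr_ge0 //; ring.
have abe_le : `|a * b * (e - d)| <= (a ^+ 2 + b ^+ 2) / (4 * n%:R).
  rewrite normrM; apply: le_trans (ler_pM _ _ ab_le e_near) _ => //.
  rewrite le_eqVlt; apply/orP; left; apply/eqP.
  by field; rewrite ?pnatr_eq0 -?lt0n ?n_gt0.
have := ler_norm (- (a * b * (e - d))); rewrite normrN.
by move: abe_le; rewrite mulrBr; lra.
Qed.

Lemma quadratic_form_gt0_near_id (R : realType) n (M : 'M[R]_n) (v : 'rV[R]_n) :
  (forall i k, `|M i k - (i == k)%:R| <= (2 * n%:R)^-1) -> v != 0 ->
  0 < (v *m M *m v^T) 0 0.
Proof.
move=> near_id v_neq0.
have [i0 vi0] : exists i, v 0 i != 0.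
  apply/existsP; apply: contraR v_neq0 => /existsPn v0; apply/eqP/matrixP => a b.
  by rewrite (ord1 a) mxE; apply/eqP; move: (v0 b); rewrite negbK.
have n_gt0 : (0 < n)%N := leq_trans (ltn0Sn i0) (ltn_ord i0).
set S := \sum_i v 0 i ^+ 2.
have S_gt0 : 0 < S.
  rewrite /S (bigD1 i0) //=; apply: ltr_pwDl; first by rewrite exprn_even_gt0.
  by apply: sumr_ge0 => i _; exact: sqr_ge0.
have -> : (v *m M *m v^T) 0 0 = \sum_i \sum_k v 0 i * v 0 k * M i k.
  rewrite mxE; under eq_bigr => k _ do rewrite !mxE mulr_suml.
  rewrite exchange_big; apply: eq_bigr => i _; apply: eq_bigr => k _.
  by rewrite mulrAC.
have term_ge i k := ler_mul_perturb (v 0 i) (v 0 k) n_gt0 (near_id i k).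
apply: lt_le_trans (ler_sum _ (fun i _ => ler_sum _ (fun k _ => term_ge i k))).
under eq_bigr => i _ do rewrite sumrB.
have diag_sum : \sum_i \sum_k v 0 i * v 0 k * (i == k)%:R = S.
  apply: eq_bigr => i _; under eq_bigr => k _ do rewrite mulrC.
  by rewrite sum_delta expr2.
have cross_sum : \sum_i \sum_k (v 0 i ^+ 2 + v 0 k ^+ 2) / (4 * n%:R) = S / 2.
  transitivity (\sum_i (v 0 i ^+ 2 *+ n + S) / (4 * n%:R)).
    by apply: eq_bigr => i _; rewrite -mulr_suml big_split /= sumr_const card_ord.
  rewrite -mulr_suml big_split /= sumr_const card_ord sumrMnl -(mulr_natr S n).
  by field; rewrite pnatr_eq0 -lt0n n_gt0.
by rewrite sumrB diag_sum cross_sum; lra.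
Qed.

Lemma smooth_on_polyfun (R : realType) (U : set 'rV[R]_3) (f : 'rV[R]_3 -> R) :
  polyfun f -> smooth_on U f.
Proof.
move=> pf l x _.
have pl : polyfun (iter_pd l f) by elim: l => //= i l; exact: polyfun_derive.
by split=> [|i]; [exact: continuous_polyfun | exact: derivable_polyfun].
Qed.

Lemma jac_id (R : realType) (z : 'rV[R]_3) : jac id z = 1%:M.
Proof. by apply/matrixP => i a; rewrite !mxE eq_sym; exact: derive_coord_delta. Qed.

Section CubicPotential.
Variables (R : realType) (C : 'I_3 -> 'I_3 -> 'I_3 -> R).
Hypotheses (C12 : forall i j k, C i j k = C j i k) (C23 : forall i j k, C i j k = C i k j).
Local Notation V := 'rV[R]_3.

Let C_rot i j k : C i j k = C j k i. Proof. by rewrite C12 C23. Qed.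

Definition cubic_potential (x : V) : R :=
  2^-1 * (\sum_i \sum_j (i == j)%:R * x 0 i * x 0 j)
  + 6^-1 * (\sum_i \sum_j \sum_k C i j k * x 0 i * x 0 j * x 0 k).

Definition cubic_metric (x : V) : 'M[R]_3 :=
  \matrix_(i, j) ((i == j)%:R + \sum_k C i j k * x 0 k).

Definition cubic_curv : tensor4 R :=
  fun i j k l => 4^-1 * \sum_q (C i k q * C j l q - C i l q * C j k q).

Local Notation g := cubic_metric.

Lemma polyfun_cubic_metric i j : polyfun (fun x => g x i j).
Proof. by under eq_fun do rewrite mxE; polyfun_auto. Qed.

Lemma cubic_metric0 : g 0 = 1%:M.
Proof.
by apply/matrixP => i j; rewrite !mxE big1 ?addr0 // => k _; rewrite mxE mulr0.
Qed.

Lemma pd_cubic_metric i j k x : pd k (fun y => g y i j) x = C i j k.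
Proof.
under eq_fun do rewrite mxE.
rewrite /pd deriveDf; try by polyfun_auto.
by rewrite derive_cst add0r derive_linear_form.
Qed.

Lemma pd_cubic_potential b :
  pd b cubic_potential =
  fun x => \sum_j (b == j)%:R * x 0 j + 2^-1 * \sum_j \sum_k C b j k * x 0 j * x 0 k.
Proof.
apply/funext => x; rewrite /pd /cubic_potential deriveDf; try by polyfun_auto.
rewrite !derive_scalef; try by polyfun_auto.
rewrite derive_quadratic_form ?derive_cubic_form // => [|i j]; last by rewrite eq_sym.
by field; rewrite ?pnatr_eq0.
Qed.

Lemma hess_cubic_potential x : hess cubic_potential x = g x.
Proof.
apply/matrixP => a b; rewrite !mxE pd_cubic_potential /pd deriveDf; try by polyfun_auto.
rewrite derive_linear_form derive_scalef; last by polyfun_auto.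
rewrite derive_quadratic_form // mulrA mulVf ?pnatr_eq0 // mul1r eq_sym.
by under eq_bigr do rewrite (C12 b).
Qed.

Lemma hessian_metric_cubic_metric (U : set V) : open U ->
  (forall y, U y -> forall v : V, v != 0 -> 0 < (v *m g y *m v^T) 0 0) ->
  hessian_metric U g.
Proof.
move=> U_open pos_def; split.
  split=> //; split; first by move=> i j; exact/smooth_on_polyfun/polyfun_cubic_metric.
  move=> y Uy; split; last exact: pos_def.
  by apply/matrixP => i j; rewrite !mxE eq_sym; under eq_bigr do rewrite C12.
move=> q Uq; exists U, id, id, cubic_potential; rewrite image_id.
do 4!split=> //.
split; first by move=> i; apply: smooth_on_polyfun; exact: polyfun_coord.
split; first by move=> i; apply: smooth_on_polyfun; exact: polyfun_coord.
do 2!split=> //.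
split; first by apply: smooth_on_polyfun; rewrite /cubic_potential; polyfun_auto.
by move=> z _; rewrite jac_id trmx1 mul1mx mulmx1 hess_cubic_potential.
Qed.

Lemma cubic_metric_near0 (eps : R) : 0 < eps ->
  exists2 e : R, 0 < e & forall y, ball (0 : V) e y ->
    forall i k, `|g y i k - (i == k)%:R| <= eps.
Proof.
move=> eps_gt0.
have near_entry (ik : 'I_3 * 'I_3) :
    \forall y \near (0 : V), `|g y ik.1 ik.2 - (ik.1 == ik.2)%:R| <= eps.
  case: ik => i k.
  have entry_cvg : (fun y => g y i k) @ (0 : V) --> g 0 i k.
    exact: continuous_polyfun (polyfun_cubic_metric i k) 0.
  move/cvgrPdist_le/(_ _ eps_gt0): entry_cvg.
  by rewrite cubic_metric0 mxE; apply: filterS => y /=; rewrite distrC.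
have [e e_gt0 near_e] := (nbhs_ballP _ _).1 (filter_forall _ near_entry).
by exists e => // y /near_e near_y i k; exact: (near_y (i, k)).
Qed.

Lemma christoffel_cubic_metric k i j :
  christoffel g k i j = fun x => 2^-1 * \sum_l C i j l * invmx (g x) k l.
Proof.
apply/funext => x; congr (_ * _); apply: eq_bigr => l _.
by rewrite !pd_cubic_metric -(C_rot i j l) -C23 addrK mulrC.
Qed.

Lemma christoffel_cubic_metric0 k i j : christoffel g k i j 0 = 2^-1 * C i j k.
Proof.
rewrite christoffel_cubic_metric cubic_metric0 invmx1 -(sum_delta k (C i j)).
by congr (_ * _); apply: eq_bigr => l _; rewrite mxE mulrC.
Qed.

Lemma pd_invmx_cubic_metric0 k l m :
  derivable (fun y => invmx (g y) k l) 0 (ev R m) /\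
  pd m (fun y => invmx (g y) k l) 0 = - C k l m.
Proof.
have g0_unit : g 0 \in unitmx by rewrite cubic_metric0 unitmx1.
have [dN DN] := @derive_invmx _ _ _ _ polyfun_cubic_metric 0 (ev R m) g0_unit.
split; first exact: (derivable_mxP _ _ _).1 dN k l.
move/matrixP/(_ k l): (derive_mx dN); rewrite /pd mxE => <-.
rewrite DN cubic_metric0 invmx1 mul1mx mulmx1 mxE.
rewrite (derive_mx (@derivable_polyfun_mx _ _ _ _ polyfun_cubic_metric 0 (ev R m))) mxE.
by have := pd_cubic_metric k l m 0; rewrite /pd => ->.
Qed.

Lemma pd_christoffel_cubic_metric0 m k i j :
  pd m (christoffel g k i j) 0 = - 2^-1 * \sum_l C i j l * C k l m.
Proof.
have dinv l := (pd_invmx_cubic_metric0 k l m).1.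
rewrite christoffel_cubic_metric /pd derive_scalef; last first.
  by apply: derivable_sumf => l; exact: derivable_scalef.
rewrite derive_sumf => [|l]; last exact: derivable_scalef.
rewrite mulNr -mulrN -sumrN; congr (_ * _); apply: eq_bigr => l _.
rewrite derive_scalef // -mulrN; congr (_ * _).
by have := (pd_invmx_cubic_metric0 k l m).2; rewrite /pd.
Qed.

Lemma riem_cubic_metric0 i j k l : riem g i j k l 0 = cubic_curv i j k l.
Proof.
rewrite /riem cubic_metric0.
under eq_bigr => q _ do rewrite mxE eq_sym mulrC.
rewrite sum_delta /riem_up !pd_christoffel_cubic_metric0.
under [X in _ + X]eq_bigr => q _ do rewrite !christoffel_cubic_metric0.
rewrite /cubic_curv !mulr_sumr -sumrB -big_split /=; apply: eq_bigr => q _.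
rewrite -(C_rot i l q) -(C_rot j l q) (C23 i q l) (C23 j q l).
by field; rewrite ?pnatr_eq0.
Qed.

Lemma alg_curv_cubic_curv : alg_curv cubic_curv.
Proof.
move=> i j k l; rewrite /cubic_curv -!mulrN -!sumrN; split; [|split; [|split]].
- by congr (_ * _); apply: eq_bigr => q _; ring.
- by congr (_ * _); apply: eq_bigr => q _; ring.
- congr (_ * _); apply: eq_bigr => q _.
  by rewrite (C12 k i) (C12 l j) (C12 k j) (C12 l i); ring.
- rewrite -!mulrDr -!big_split /= big1 ?mulr0 // => q _.
  by rewrite (C12 k i) (C12 j i) (C12 k j); ring.
Qed.

End CubicPotential.

Lemma ord3P (P : 'I_3 -> Prop) : P 0 -> P 1 -> P 2 -> forall i, P i.
Proof.
move=> P0 P1 P2 [[|[|[|//]]] Hi].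
- by rewrite (_ : Ordinal Hi = 0) //; apply: val_inj.
- by rewrite (_ : Ordinal Hi = 1) //; apply: val_inj.
- by rewrite (_ : Ordinal Hi = 2) //; apply: val_inj.
Qed.

Lemma curv_tensor_eq0 (R : realType) (D : tensor4 R) :
  (forall i j k l, D i j k l = - D j i k l) -> (forall i j k l, D i j k l = D k l i j) ->
  D 0 1 0 1 = 0 -> D 0 2 0 2 = 0 -> D 1 2 1 2 = 0 ->
  D 0 1 0 2 = 0 -> D 0 1 1 2 = 0 -> D 0 2 1 2 = 0 ->
  forall i j k l, D i j k l = 0.
Proof.
move=> anti pair e1 e2 e3 e4 e5 e6.
apply: ord3P; apply: ord3P; apply: ord3P; apply: ord3P;
match goal with |- D ?i ?j ?k ?l = 0 =>
  have := anti i j k l; have := anti k l i j; have := anti l k i j;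
  have := anti j i l k; have := pair i j k l; have := pair j i k l;
  have := pair i j l k; have := pair j i l k
end; lra.
Qed.

Lemma alg_curv_eq (R : realType) (A B : tensor4 R) : alg_curv A -> alg_curv B ->
  A 0 1 0 1 = B 0 1 0 1 -> A 0 2 0 2 = B 0 2 0 2 ->
  A 1 2 1 2 = B 1 2 1 2 -> A 0 1 0 2 = B 0 1 0 2 ->
  A 0 1 1 2 = B 0 1 1 2 -> A 0 2 1 2 = B 0 2 1 2 ->
  A = B.
Proof.
move=> hA hB e1 e2 e3 e4 e5 e6.
have D0 := @curv_tensor_eq0 R (fun i j k l => A i j k l - B i j k l).
apply/funext => i; apply/funext => j; apply/funext => k; apply/funext => l.
apply/eqP; rewrite -subr_eq0; apply/eqP; apply: D0 => {i j k l}.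
- by move=> i j k l; rewrite (hA i j k l).1 (hB i j k l).1 ; ring.
- by move=> i j k l; rewrite (hA i j k l).2.2.1 (hB i j k l).2.2.1.
all: by apply/eqP; rewrite subr_eq0; apply/eqP.
Qed.

Section CubicOfCoefficients.
Variables (R : realType) (a1 a2 a3 b12 b13 b21 b23 b31 b32 c : R).

(* The symmetric cubic form with C_iii = a_i, C_iij = b_ij (i != j) and C_123 = c in
   1-based names (so [a1] sits at (0, 0, 0)); the multiset {i, j, k} is identified by
   how many of the indices are 0 and how many are 1. *)
Definition cubic_of (i j k : 'I_3) : R :=
  let count t := ((i == t :> nat) + (j == t :> nat) + (k == t :> nat))%N in
  match count 0%N, count 1%N with
  | 3, 0 => a1 | 0, 3 => a2 | 0, 0 => a3
  | 2, 1 => b12 | 2, 0 => b13 | 1, 2 => b21 | 0, 2 => b23 | 1, 0 => b31 | 0, 1 => b32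
  | _, _ => c
  end%N.

Lemma cubic_of_sym12 i j k : cubic_of i j k = cubic_of j i k.
Proof. by case: i j k => [[|[|[|//]]] ?] [[|[|[|//]]] ?] [[|[|[|//]]] ?]. Qed.

Lemma cubic_of_sym23 i j k : cubic_of i j k = cubic_of i k j.
Proof. by case: i j k => [[|[|[|//]]] ?] [[|[|[|//]]] ?] [[|[|[|//]]] ?]. Qed.

Lemma cubic_curv_cubic_of : [/\
  4 * cubic_curv cubic_of 0 1 0 1 = a1*b21 + a2*b12 - b12^+2 - b21^+2 + b13*b23 - c^+2,
  4 * cubic_curv cubic_of 0 2 0 2 = a1*b31 + a3*b13 - b13^+2 - b31^+2 + b12*b32 - c^+2,
  4 * cubic_curv cubic_of 1 2 1 2 = a2*b32 + a3*b23 - b23^+2 - b32^+2 + b21*b31 - c^+2,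
  4 * cubic_curv cubic_of 0 1 0 2 = a1*c - b12*b13 + b12*b23 - c*b21 + b13*b32 - c*b31 &
  4 * cubic_curv cubic_of 0 1 1 2 = b12*c - b13*b21 + b21*b23 - c*a2 + c*b32 - b31*b23 /\
  4 * cubic_curv cubic_of 0 2 1 2 = b12*b31 - b13*c + b21*b32 - c*b23 + c*a3 - b31*b32].
Proof.
rewrite /cubic_curv !big_ord_recl !big_ord0 /cubic_of /=.
by split; [| | | |split]; field; rewrite ?pnatr_eq0.
Qed.

End CubicOfCoefficients.

Ltac field_nz :=
  field; repeat match goal with H : is_true (_ != 0) |- _ => rewrite H; clear H end; by [].

Section CurvatureEquations.
Variable R : realType.

Definition curv_equations (a1 a2 a3 b12 b13 b21 b23 b31 b32 c T11 T22 T33 X Y Z : R) : Prop :=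
  [/\ a1*b21 + a2*b12 - b12^+2 - b21^+2 + b13*b23 - c^+2 = T11,
      a1*b31 + a3*b13 - b13^+2 - b31^+2 + b12*b32 - c^+2 = T22,
      a2*b32 + a3*b23 - b23^+2 - b32^+2 + b21*b31 - c^+2 = T33,
      a1*c - b12*b13 + b12*b23 - c*b21 + b13*b32 - c*b31 = X &
      (b12*c - b13*b21 + b21*b23 - c*a2 + c*b32 - b31*b23 = Y /\
       b12*b31 - b13*c + b21*b32 - c*b23 + c*a3 - b31*b32 = Z)].

Definition curv_solvable (T11 T22 T33 X Y Z : R) : Prop :=
  exists a1 a2 a3 b12 b13 b21 b23 b31 b32 c,
    curv_equations a1 a2 a3 b12 b13 b21 b23 b31 b32 c T11 T22 T33 X Y Z.

(* Explicit families of solutions: substituting a family solves the system except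
   for the equations that reduce to the scalar constraint taken as hypothesis. *)
Lemma curv_solvable_XZ T11 T22 T33 X Y Z P c : X != 0 -> Z != 0 -> c != 0 ->
  c^+2 * ((P - T11) * (P - T22) - X^+2) = P * X^+2 -> curv_solvable T11 T22 T33 X Y Z.
Proof.
move=> hX hZ hc constraint.
have diag T : T + (c^+2 * ((P - T11) * (P - T22) - X^+2) - P * X^+2) / X^+2 = T.
  by rewrite constraint subrr mul0r addr0.
pose b21 := c * (T11 - P) / X; pose b31 := c * (T22 - P) / X; pose b23 := c * (T33 - P) / Z.
exists (X/c + b21 + b31), ((b21*b23 - b31*b23 - Y)/c), (Z/c + b23), 0, 0, b21, b23, b31, 0, c.
rewrite /b21 /b31 /b23; split; [rewrite -[in RHS](diag T11) | rewrite -[in RHS](diag T22)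
  | rewrite -[in RHS](diag T33) | | split]; by field_nz.
Qed.

Lemma curv_solvable_XY T11 T22 T33 X Y Z P c : X != 0 -> Y != 0 -> c != 0 ->
  c^+2 * ((P - T11) * (P - T22) - X^+2) = P * X^+2 -> curv_solvable T11 T22 T33 X Y Z.
Proof.
move=> hX hY hc constraint.
have diag T : T + (c^+2 * ((P - T11) * (P - T22) - X^+2) - P * X^+2) / X^+2 = T.
  by rewrite constraint subrr mul0r addr0.
pose b21 := c * (T11 - P) / X; pose b31 := c * (T22 - P) / X; pose b32 := c * (P - T33) / Y.
exists (X/c + b21 + b31), (b32 - Y/c), ((Z - b21*b32 + b31*b32)/c), 0, 0, b21, 0, b31, b32, c.
rewrite /b21 /b31 /b32; split; [rewrite -[in RHS](diag T11) | rewrite -[in RHS](diag T22)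
  | rewrite -[in RHS](diag T33) | | split]; by field_nz.
Qed.

Lemma curv_solvable_YZ T11 T22 T33 X Y Z P c : Y != 0 -> Z != 0 -> c != 0 ->
  c^+2 * ((P - T22) * (P - T33) - Z^+2) = P * Z^+2 -> curv_solvable T11 T22 T33 X Y Z.
Proof.
move=> hY hZ hc constraint.
have diag T : T + (c^+2 * ((P - T22) * (P - T33) - Z^+2) - P * Z^+2) / Z^+2 = T.
  by rewrite constraint subrr mul0r addr0.
pose b13 := c * (T22 - P) / Z; pose b23 := c * (T33 - P) / Z; pose b12 := c * (P - T11) / Y.
exists ((X + b12*b13 - b12*b23)/c), (b12 - Y/c), (Z/c + b13 + b23), b12, b13, 0, b23, 0, 0, c.
rewrite /b13 /b23 /b12; split; [rewrite -[in RHS](diag T11) | rewrite -[in RHS](diag T22)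
  | rewrite -[in RHS](diag T33) | | split]; by field_nz.
Qed.

Lemma curv_solvable_Z T11 T22 T33 Z w u : w != 0 ->
  u * (T33 - T22 + Z * (w - w^-1)) = T11 - T22 - Z * T22 / w + Z * w + Z^+2 ->
  curv_solvable T11 T22 T33 0 0 Z.
Proof.
move=> hw constraint.
have diag : T11 + (u * (T33 - T22 + Z * (w - w^-1))
    - (T11 - T22 - Z * T22 / w + Z * w + Z^+2)) = T11.
  by rewrite constraint subrr addr0.
pose b21 := Z + w * (1 - u).
exists ((T22 + w^+2 - u)/w), (T33 + 1 - b21*w), 0, u, 0, b21, 0, w, 1, 0.
by rewrite /b21; split; [rewrite -[in RHS]diag | | | | split]; field_nz.
Qed.

Lemma curv_solvable_X T11 T22 T33 X w u : w != 0 ->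
  u * (T22 - T11 + X * (w - w^-1)) = T33 - T11 - X * T11 / w + X * w + X^+2 ->
  curv_solvable T11 T22 T33 X 0 0.
Proof.
move=> hw constraint.
have diag : T33 + (u * (T22 - T11 + X * (w - w^-1))
    - (T33 - T11 - X * T11 / w + X * w + X^+2)) = T33.
  by rewrite constraint subrr addr0.
pose b32 := X + w * (1 - u).
exists 0, ((T11 + w^+2 - u)/w), (T22 + 1 - w*b32), w, 1, 0, u, 0, b32, 0.
by rewrite /b32; split; [| | rewrite -[in RHS]diag | | split]; field_nz.
Qed.

Lemma curv_solvable_Y T11 T22 T33 Y w u : w != 0 ->
  u * (T33 - T11 - Y * (w - w^-1)) = T22 - T11 + Y * T11 / w - Y * w + Y^+2 ->
  curv_solvable T11 T22 T33 0 Y 0.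
Proof.
move=> hw constraint.
have diag : T22 + (u * (T33 - T11 - Y * (w - w^-1))
    - (T22 - T11 + Y * T11 / w - Y * w + Y^+2)) = T22.
  by rewrite constraint subrr addr0.
pose b31 := w * (1 - u) - Y.
exists ((T11 + w^+2 - u)/w), 0, (T33 + 1 - w*b31), 0, u, w, 1, b31, 0, 0.
by rewrite /b31; split; [| rewrite -[in RHS]diag | | | split]; field_nz.
Qed.

Lemma diagonal_constraint_solvable (A B X : R) : X != 0 ->
  exists P c, c != 0 /\ c^+2 * ((P - A)*(P - B) - X^+2) = P * X^+2.
Proof.
move=> hX.
pose P := `|A| + `|B| + `|X| + 1.
have hA := ler_norm A; have hB := ler_norm B.
have nA := normr_ge0 A; have nB := normr_ge0 B; have nX := normr_ge0 X.
have e1 : `|X| + 1 <= P - A by rewrite /P; lra.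
have e2 : `|X| + 1 <= P - B by rewrite /P; lra.
have hX2 : `|X|^+2 = X^+2 by rewrite real_normK // num_real.
have hP : 0 < P by rewrite /P; lra.
have al0 : 0 < (P - A)*(P - B) - X^+2.
  have : (`|X| + 1) * (`|X| + 1) <= (P - A) * (P - B).
    by apply: ler_pM => //; lra.
  rewrite -hX2; nra.
have X20 : 0 < X^+2 by rewrite -hX2 exprn_gt0 // normr_gt0.
have arg0 : 0 < P * X^+2 / ((P - A)*(P - B) - X^+2).
  by apply: divr_gt0 => //; apply: mulr_gt0.
exists P, (Num.sqrt (P * X^+2 / ((P - A)*(P - B) - X^+2))); split.
  by rewrite gt_eqF // sqrtr_gt0.
rewrite sqr_sqrtr; last exact: ltW.
by field; rewrite gt_eqF.
Qed.

Lemma linear_constraint_solvable (d Z0 : R) (r : R -> R) : Z0 != 0 ->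
  exists w u, w != 0 /\ u * (d + Z0 * (w - w^-1)) = r w.
Proof.
move=> Z0_neq0; have [->|d_neq0] := eqVneq d 0.
  have k_neq0 : Z0 * (2 - 2^-1) != 0.
    rewrite mulf_neq0 // (_ : 2 - 2^-1 = 3 / 2); last by field; rewrite ?pnatr_eq0.
    by rewrite mulf_neq0 ?invr_eq0 ?pnatr_eq0.
  exists 2, (r 2 / (Z0 * (2 - 2^-1))); split; first by rewrite pnatr_eq0.
  by rewrite add0r mulfVK.
exists 1, (r 1 / d); split; first exact: oner_neq0.
by rewrite invr1 subrr mulr0 addr0 mulfVK.
Qed.

Lemma curv_solvable_all T11 T22 T33 X Y Z : curv_solvable T11 T22 T33 X Y Z.
Proof.
case: (eqVneq X 0) => hX; case: (eqVneq Y 0) => hY; case: (eqVneq Z 0) => hZ.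
- rewrite hX hY hZ.
  case: (eqVneq (T33 - T22) 0) => d0.
    case: (eqVneq T11 T22) => e.
      apply: (@curv_solvable_Z _ _ _ _ 1 0); first exact: oner_neq0.
      by rewrite e; ring.
    apply: (@curv_solvable_X _ _ _ _ 1 ((T33 - T11)/(T22 - T11))); first exact: oner_neq0.
    have ne : T22 - T11 != 0 by rewrite subr_eq0 eq_sym.
    by field.
  apply: (@curv_solvable_Z _ _ _ _ 1 ((T11 - T22)/(T33 - T22))); first exact: oner_neq0.
  by field.
- rewrite hX hY.
  have [w [u [hw hu]]] := @linear_constraint_solvable (T33 - T22) Z
     (fun w => T11 - T22 - Z*T22/w + Z*w + Z^+2) hZ.
  exact: (@curv_solvable_Z _ _ _ _ w u).
- rewrite hX hZ.
  have hY' : - Y != 0 by rewrite oppr_eq0.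
  have [w [u [hw hu]]] := @linear_constraint_solvable (T33 - T11) (- Y)
     (fun w => T22 - T11 + Y*T11/w - Y*w + Y^+2) hY'.
  by apply: (@curv_solvable_Y _ _ _ _ w u) => //; rewrite -hu mulNr.
- have [P [c [hc constraint]]] := diagonal_constraint_solvable T22 T33 hZ.
  exact: (@curv_solvable_YZ _ _ _ _ _ _ P c).
- rewrite hY hZ.
  have [w [u [hw hu]]] := @linear_constraint_solvable (T22 - T11) X
     (fun w => T33 - T11 - X*T11/w + X*w + X^+2) hX.
  exact: (@curv_solvable_X _ _ _ _ w u).
- have [P [c [hc constraint]]] := diagonal_constraint_solvable T11 T22 hX.
  exact: (@curv_solvable_XZ _ _ _ _ _ _ P c).
- have [P [c [hc constraint]]] := diagonal_constraint_solvable T11 T22 hX.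
  exact: (@curv_solvable_XY _ _ _ _ _ _ P c).
- have [P [c [hc constraint]]] := diagonal_constraint_solvable T11 T22 hX.
  exact: (@curv_solvable_XZ _ _ _ _ _ _ P c).
Qed.

End CurvatureEquations.

Lemma cubic_curv_surj (R : realType) (A : tensor4 R) : alg_curv A ->
  exists C : 'I_3 -> 'I_3 -> 'I_3 -> R, [/\ forall i j k, C i j k = C j i k,
    forall i j k, C i j k = C i k j & cubic_curv C = A].
Proof.
move=> A_curv.
have [a1 [a2 [a3 [b12 [b13 [b21 [b23 [b31 [b32 [c]]]]]]]]]] :=
  curv_solvable_all (4 * A 0 1 0 1) (4 * A 0 2 0 2) (4 * A 1 2 1 2)
                    (4 * A 0 1 0 2) (4 * A 0 1 1 2) (4 * A 0 2 1 2).
case=> e1 e2 e3 e4 [e5 e6].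
pose C := cubic_of a1 a2 a3 b12 b13 b21 b23 b31 b32 c.
have C12 i j k : C i j k = C j i k by exact: cubic_of_sym12.
exists C; split=> // [i j k|]; first exact: cubic_of_sym23.
have [d1 d2 d3 d4 [d5 d6]] := cubic_curv_cubic_of a1 a2 a3 b12 b13 b21 b23 b31 b32 c.
have four_neq0 : (4 : R) != 0 by rewrite pnatr_eq0.
apply: alg_curv_eq (alg_curv_cubic_curv C12) A_curv _ _ _ _ _ _; apply: (mulfI four_neq0).
- by rewrite d1 e1.
- by rewrite d2 e2.
- by rewrite d3 e3.
- by rewrite d4 e4.
- by rewrite d5 e5.
- by rewrite d6 e6.
Qed.

Theorem mainTheorem5 (R : realType) (A : tensor4 R) :
  alg_curv A ->
  exists (U : set 'rV[R]_3) (g : 'rV[R]_3 -> 'M[R]_3) (p : 'rV[R]_3) (L : 'M[R]_3),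
    hessian_metric U g /\ U p /\
    (forall u v : 'rV[R]_3, (u *m L) *m (v *m L)^T = u *m g p *m v^T) /\
    (forall u1 u2 u3 u4 : 'rV[R]_3,
       ev4 (fun i j k l => riem g i j k l p) u1 u2 u3 u4
       = ev4 A (u1 *m L) (u2 *m L) (u3 *m L) (u4 *m L)).
Proof.
move=> /cubic_curv_surj [C [C12 C23 <-]].
have eps_gt0 : 0 < (2 * 3%:R)^-1 :> R by rewrite invr_gt0.
have [e e_gt0 near_id] := cubic_metric_near0 C eps_gt0.
exists (ball 0 e), (cubic_metric C), 0, 1%:M; split; [|split; [|split]].
- apply: hessian_metric_cubic_metric => // [|y /near_id y_near v]; first exact: ball_open.
  exact: quadratic_form_gt0_near_id.
- exact: ballxx.
- by move=> u v; rewrite cubic_metric0 !mulmx1.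
- move=> u1 u2 u3 u4; rewrite !mulmx1; congr ev4.
  by apply/funext => i; apply/funext => j; apply/funext => k; apply/funext => l;
    rewrite riem_cubic_metric0.
Qed.
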